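(* Any two equivalent reduced operation sequences have the same profile.
   Context: Operation sequences: $\sigma[a]$ ($a\ge1$) denotes pushing the top $a$ elements of the input stack, as a block with relative order unchanged, onto the top of a working stack; $\tau[b]$ ($b\ge1$) denotes moving the top $b$ elements of the working stack, as a block with relative order unchanged, onto the top of an output stack; $\sigma=\sigma[1]$, $\tau=\tau[1]$. A well-formed operation sequence is a word $\alpha=\alpha_1\cdots\alpha_m$ in these symbols such that in every prefix the total push size is at least the total pop size, with equality for the whole word; its size $n$ is the total push size. Acting on an input stack containing $1,\dots,n$ with $1$ on top, it produces the permutation read from the final output stack top to bottom. Two well-formed sequences are equivalent if they have the same size and produce the same permutation. $\alpha$ is reduced if every consecutive pair $\alpha_i\alpha_{i+1}$ with $\alpha_i$ a push and $\alpha_{i+1}$ a pop equals $\sigma[1]\tau[1]$. The profile of $\alpha$ is the polygonal path through $v_0=(0,0),v_1,\dots,v_m$ where $v_i=v_{i-1}+(a,a)$ if $\alpha_i=\sigma[a]$ and $v_i=v_{i-1}+(b,-b)$ if $\alpha_i=\tau[b]$. *)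

From mathcomp Require Import all_boot all_order all_algebra.
Set Implicit Arguments. Unset Strict Implicit. Unset Printing Implicit Defensive.
Import Order.TTheory GRing.Theory Num.Theory.

(* An operation: Push a = sigma[a], Pop b = tau[b]. *)
Inductive op := Push of nat | Pop of nat.

Definition push_size (o : op) : nat := if o is Push a then a else 0.
Definition pop_size (o : op) : nat := if o is Pop b then b else 0.
Definition op_pos (o : op) : bool :=
  match o with Push a => 0 < a | Pop b => 0 < b end.

Definition total_push (w : seq op) : nat := sumn (map push_size w).
Definition total_pop (w : seq op) : nat := sumn (map pop_size w).

Definition op_size (w : seq op) : nat := total_push w.

Definition well_formed (w : seq op) : Prop :=
  all op_pos w /\
  (forall k, total_pop (take k w) <= total_push (take k w)) /\
  total_pop w = total_push w.

(* stacks are lists with the top element first *)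
Definition step (st : seq nat * seq nat * seq nat) (o : op)
  : seq nat * seq nat * seq nat :=
  let: (inp, wk, out) := st in
  match o with
  | Push a => (drop a inp, take a inp ++ wk, out)
  | Pop b => (inp, drop b wk, take b wk ++ out)
  end.

(* the permutation produced: the final output stack read from top to bottom,
   starting from input stack 1..n (1 on top), n = size of w *)
Definition produce (w : seq op) : seq nat :=
  (foldl step (iota 1 (op_size w), [::], [::]) w).2.

Definition equivalent (w1 w2 : seq op) : Prop :=
  well_formed w1 /\ well_formed w2 /\
  op_size w1 = op_size w2 /\ produce w1 = produce w2.

Definition reduced (w : seq op) : Prop :=
  forall i a b, (i.+1 < size w)%N ->
    nth (Pop 0) w i = Push a -> nth (Pop 0) w i.+1 = Pop b ->
    a = 1%N /\ b = 1%N.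

Definition op_vec (o : op) : rat * rat :=
  match o with
  | Push a => ((a%:R)%R, (a%:R)%R)
  | Pop b => ((b%:R)%R, (- b%:R)%R)
  end.

Definition vertex (w : seq op) (i : nat) : rat * rat :=
  foldl (fun v o => ((v.1 + (op_vec o).1)%R, (v.2 + (op_vec o).2)%R))
        (0%R, 0%R) (take i w).

Definition in_profile (w : seq op) (p : rat * rat) : Prop :=
  (size w = 0%N /\ p = vertex w 0) \/
  exists i t, (0 < i <= size w)%N /\ (0 <= t <= 1)%R /\
    p = (((vertex w i.-1).1 + t * ((vertex w i).1 - (vertex w i.-1).1))%R,
         ((vertex w i.-1).2 + t * ((vertex w i).2 - (vertex w i.-1).2))%R).

Definition same_profile (w1 w2 : seq op) : Prop :=
  forall p, in_profile w1 p <-> in_profile w2 p.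

(* Cutting every sigma[a] and tau[b] into unit steps does not change the
   profile as a point set, since the pieces are collinear; so the profile only
   depends on this unit word.  In a reduced sequence a pop of size > 1 follows
   a pop, and a push followed by a pop is sigma[1].  Hence, reading the output
   from the bottom, an entry x exceeding all entries below it (maximum M) is
   preceded in the unit word by exactly x - M unit pushes, and any other entry
   by none: the unit word, and with it the profile, is determined by the
   permutation produced. *)

From mathcomp Require Import all_boot all_order all_algebra.
From mathcomp Require Import zify ring lra.
Set Implicit Arguments. Unset Strict Implicit. Unset Printing Implicit Defensive.
Import Order.TTheory GRing.Theory Num.Theory.

Definition op_len (o : op) : nat := match o with Push a => a | Pop b => b end.
Definition unit_op (o : op) : op := if o is Push _ then Push 1 else Pop 1.
Definition unit_steps (o : op) : seq op := nseq (op_len o) (unit_op o).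
Definition unit_word (w : seq op) : seq op := flatten (map unit_steps w).

(* The unit word of a reduced sequence whose output, read from the bottom, is
   [r], once the elements up to [M] have been pushed. *)
Fixpoint arrival_word (r : seq nat) (M : nat) : seq op :=
  if r is x :: r' then nseq (x - M) (Push 1) ++ Pop 1 :: arrival_word r' (maxn M x)
  else [::].

Lemma arrival_word_cat r1 r2 M :
  arrival_word (r1 ++ r2) M = arrival_word r1 M ++ arrival_word r2 (foldl maxn M r1).
Proof. by elim: r1 M => //= x r IH M; rewrite IH -catA. Qed.

Lemma arrival_word_small r M :
  all (fun x => x <= M) r -> arrival_word r M = nseq (size r) (Pop 1).
Proof.
elim: r => //= x r IH /andP[hx hr].
have -> : x - M = 0 by lia.
by rewrite (maxn_idPl hx) IH.
Qed.

Lemma foldl_maxn_small r M : all (fun x => x <= M) r -> foldl maxn M r = M.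
Proof. by elim: r => //= x r IH /andP[hx hr]; rewrite (maxn_idPl hx) IH. Qed.

Lemma foldl_maxn_le r M m :
  all (fun x => x <= m) r -> M <= m -> foldl maxn M r <= m.
Proof. by elim: r M => //= x r IH M /andP[hx hr] hM; apply: IH => //; lia. Qed.

Lemma arrival_word_pop t M m : M <= m ->
  (M = m /\ all (fun x => x <= m) t) \/ t = [:: m] ->
  arrival_word t M = nseq (m - M) (Push 1) ++ nseq (size t) (Pop 1) /\
  foldl maxn M t = m.
Proof.
move=> hM [[-> ht]|->]; first by rewrite subnn arrival_word_small ?foldl_maxn_small.
by rewrite /= (maxn_idPr hM).
Qed.

Lemma total_push_rcons p o : total_push (rcons p o) = total_push p + push_size o.
Proof. by rewrite /total_push map_rcons sumn_rcons. Qed.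

Lemma total_pop_rcons p o : total_pop (rcons p o) = total_pop p + pop_size o.
Proof. by rewrite /total_pop map_rcons sumn_rcons. Qed.

Lemma unit_word_rcons p o : unit_word (rcons p o) = unit_word p ++ unit_steps o.
Proof. by rewrite /unit_word map_rcons flatten_rcons. Qed.

Lemma reduced_last_push p a b s :
  reduced (p ++ Pop b :: s) -> last (Pop 0) p = Push a -> a = 1 /\ b = 1.
Proof.
case/lastP: p => [//|p o] red; rewrite last_rcons => ho; subst o.
apply: (red (size p)).
- by rewrite size_cat size_rcons /=; lia.
- by rewrite nth_cat size_rcons ltnS leqnn nth_rcons ltnn eqxx.
- by rewrite nth_cat size_rcons ltnn subnn.
Qed.

Lemma total_push_prefix p s : total_push p <= total_push (p ++ s).
Proof. by rewrite /total_push map_cat sumn_cat leq_addr. Qed.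

Section Simulation.

Variable n : nat.

(* What the next pop may rely on: after a pop, the largest element pushed so
   far has reached the output; after [Push 1], it lies on top of the working
   stack.  The empty prefix counts as ending with a pop. *)
Definition ready (p : seq op) (wk out : seq nat) : Prop :=
  match last (Pop 0) p with
  | Pop _ => foldl maxn 0 (rev out) = total_push p
  | Push 1 => wk = total_push p :: behead wk
  | Push _ => True
  end.

Definition sim_inv (p : seq op) (st : seq nat * seq nat * seq nat) : Prop :=
  let: (inp, wk, out) := st in
  let m := total_push p in
  [/\ inp = iota m.+1 (n - m), all (fun x => x <= m) (wk ++ out),
      size wk + total_pop p = m, ready p wk out &
      unit_word p = arrival_word (rev out) 0
                      ++ nseq (m - foldl maxn 0 (rev out)) (Push 1)].

Lemma sim_inv_nil : sim_inv [::] (iota 1 n, [::], [::]).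
Proof. by rewrite /= subn0. Qed.

Lemma sim_inv_push p st a : sim_inv p st -> total_push p + a <= n ->
  sim_inv (rcons p (Push a)) (step st (Push a)).
Proof.
case: st => [[inp wk] out] /= [-> hall hsz _ huw] ha.
set m := total_push p in hall hsz huw ha *.
have hM : foldl maxn 0 (rev out) <= m.
  by apply: foldl_maxn_le => //; rewrite all_rev; move: hall; rewrite all_cat => /andP[].
rewrite total_push_rcons total_pop_rcons /= addn0 take_iota drop_iota.
split.
- by congr iota; lia.
- rewrite -catA all_cat; apply/andP; split; first by apply/allP => x; rewrite mem_iota; lia.
  by apply: sub_all hall => x; lia.
- by rewrite size_cat size_iota; lia.
- rewrite /ready last_rcons total_push_rcons /= -/m; case: a ha => [|[|a]] ha //.
  have -> : minn 1 (n - m) = 1 by lia.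
  by rewrite /= addn1.
- rewrite unit_word_rcons huw /unit_steps /= -catA -nseqD -/m.
  by congr (_ ++ nseq _ _); lia.
Qed.

Lemma sim_inv_pop p st b : sim_inv p st ->
  total_pop p + b <= total_push p ->
  (forall a, last (Pop 0) p = Push a -> a = 1 /\ b = 1) ->
  sim_inv (rcons p (Pop b)) (step st (Pop b)).
Proof.
case: st => [[inp wk] out] /= [hinp hall hsz hready huw] hb hred.
set m := total_push p in hinp hall hsz hready huw hb *.
set M := foldl maxn 0 (rev out) in hready huw.
move: hall; rewrite all_cat => /andP[hwk hout].
have hM : M <= m by apply: foldl_maxn_le; rewrite ?all_rev.
have htake : all (fun x => x <= m) (rev (take b wk)).
  by rewrite all_rev; apply/allP => x /mem_take; apply: (allP hwk).
have hcases : (M = m /\ all (fun x => x <= m) (rev (take b wk))) \/ rev (take b wk) = [:: m].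
  move: hready hred; rewrite /ready.
  case: (last (Pop 0) p) => [a|b'] hready hred; last by left.
  have [ea eb] := hred a erefl; subst a b.
  by right; rewrite hready /= take0.
have [haw hmax] := arrival_word_pop hM hcases.
rewrite total_push_rcons total_pop_rcons /= addn0 rev_cat arrival_word_cat foldl_cat -/M.
split => //.
- rewrite all_cat; apply/andP; split; first by apply/allP => x /mem_drop; apply: (allP hwk).
  by rewrite all_cat hout andbT; apply/allP => x /mem_take; apply: (allP hwk).
- by rewrite size_drop; lia.
- by rewrite /ready last_rcons total_push_rcons addn0 rev_cat foldl_cat.
- rewrite hmax subnn cats0 haw size_rev size_takel; last by lia.
  by rewrite unit_word_rcons huw -catA.
Qed.

End Simulation.

Lemma sim_inv_run w : reduced w -> well_formed w ->
  sim_inv (op_size w) w (foldl step (iota 1 (op_size w), [::], [::]) w).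
Proof.
move=> red [_ [pref _]].
suff: forall p s, w = p ++ s ->
    sim_inv (op_size w) p (foldl step (iota 1 (op_size w), [::], [::]) p).
  by move/(_ w [::] (esym (cats0 w))).
elim/last_ind => [|p o IH] s ew; first exact: sim_inv_nil.
have inv := IH (o :: s); rewrite ew cat_rcons in inv *.
rewrite foldl_rcons; case: o ew inv => [a|b] ew /(_ erefl) inv.
- apply: sim_inv_push inv _.
  by have := total_push_prefix (rcons p (Push a)) s; rewrite total_push_rcons cat_rcons.
- apply: sim_inv_pop inv _ _.
  + have := pref (size p).+1; rewrite ew take_size_cat ?size_rcons //.
    by rewrite total_push_rcons total_pop_rcons addn0.
  + by move=> a; apply: (@reduced_last_push _ _ _ s); rewrite -cat_rcons -ew.
Qed.

Lemma unit_word_produce w : reduced w -> well_formed w ->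
  unit_word w = arrival_word (rev (produce w)) 0
                  ++ nseq (op_size w - foldl maxn 0 (rev (produce w))) (Push 1).
Proof.
move=> red wf; have := sim_inv_run red wf; rewrite /produce.
by case: (foldl step _ w) => [[inp wk] out] [].
Qed.

Lemma unit_word_equivalent w1 w2 : reduced w1 -> reduced w2 ->
  equivalent w1 w2 -> unit_word w1 = unit_word w2.
Proof.
move=> red1 red2 [wf1 [wf2 [size12 prod12]]].
by rewrite (unit_word_produce red1 wf1) (unit_word_produce red2 wf2) size12 prod12.
Qed.

Local Open Scope ring_scope.

Definition move (v : rat * rat) (u : rat) (d : rat * rat) : rat * rat :=
  (v.1 + u * d.1, v.2 + u * d.2).

Lemma move0 v d : move v 0 d = v.
Proof. by case: v => x y; rewrite /move /= !mul0r !addr0. Qed.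

Lemma move_move v r s d : move (move v r d) s d = move v (r + s) d.
Proof. by rewrite /move /=; congr pair; ring. Qed.

Definition segment (a b p : rat * rat) : Prop :=
  exists2 t : rat, 0 <= t <= 1 &
    p = (a.1 + t * (b.1 - a.1), a.2 + t * (b.2 - a.2)).

Lemma segment_end a b : segment a b b.
Proof.
exists 1; first by rewrite ler01 lexx.
by case: a b => [x y] [x' y']; congr pair; rewrite /= mul1r addrC subrK.
Qed.

Lemma segment_move v d r s p : r <= s ->
  segment (move v r d) (move v s d) p <-> exists2 u, r <= u <= s & p = move v u d.
Proof.
move=> rs; split.
  case=> t /andP[t0 t1] ->; exists (r + t * (s - r)); first by apply/andP; split; nra.
  by rewrite /move /=; congr pair; ring.
case=> u /andP[ru us] ->; have [sr|{}rs] := lerP s r.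
  have eu : u = r by lra.
  by exists 0; [rewrite lexx ler01 | rewrite eu /move /=; congr pair; ring].
have sr0 : s - r != 0 by rewrite subr_eq0 gt_eqF.
exists ((u - r) / (s - r)).
  by rewrite divr_ge0 ?subr_ge0 ?(ltW rs) //= ler_pdivrMr ?subr_gt0 // mul1r; lra.
by rewrite /move /=; congr pair; field.
Qed.

Lemma segment_cat v d q r s p : q <= r <= s ->
  segment (move v q d) (move v s d) p <->
  segment (move v q d) (move v r d) p \/ segment (move v r d) (move v s d) p.
Proof.
case/andP=> qr rs; rewrite !segment_move //; last exact: le_trans rs.
split.
- case=> u /andP[qu us] ->; have [ur|ru] := lerP u r; [left|right];
    by exists u => //; apply/andP; split; lra.
- by case=> -[u /andP[? ?] ->]; exists u => //; apply/andP; split; lra.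
Qed.

Definition vstep (v : rat * rat) (o : op) : rat * rat :=
  (v.1 + (op_vec o).1, v.2 + (op_vec o).2).

Definition op_dir (o : op) : rat * rat := if o is Push _ then (1, 1) else (1, -1).

Lemma vstep_move v o : vstep v o = move v (op_len o)%:R (op_dir o).
Proof. by case: o => a; rewrite /vstep /move /=; congr pair; ring. Qed.

Fixpoint on_path (v : rat * rat) (w : seq op) (p : rat * rat) : Prop :=
  if w is o :: w' then segment v (vstep v o) p \/ on_path (vstep v o) w' p
  else p = v.

Lemma on_path_start v w : on_path v w v.
Proof.
case: w => [|o w] //=; left; exists 0; first by rewrite lexx ler01.
by case: v => x y; rewrite /= !mul0r !addr0.
Qed.

Lemma on_path_unit_steps v o s p :
  on_path v (unit_steps o ++ s) p <-> on_path v (o :: s) p.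
Proof.
have [unit_len unit_dir] :
  (op_len (unit_op o))%:R = 1 :> rat /\ op_dir (unit_op o) = op_dir o by case: o.
rewrite /= vstep_move /unit_steps.
elim: (op_len o) v => [|k IH] v.
  rewrite move0 /=; split; [by right | case=> // -[t _ ->]].
  by rewrite !subrr !mulr0 !addr0 -surjective_pairing; apply: on_path_start.
rewrite /= IH vstep_move unit_len unit_dir move_move -natr1 addrC.
have e0 := move0 v (op_dir o).
rewrite -[in segment v]e0.
rewrite (@segment_cat v (op_dir o) 0 1 (k%:R + 1)); last by rewrite ler01 lerDr ler0n.
by rewrite e0; tauto.
Qed.

Lemma on_path_unit_word v w p : on_path v (unit_word w) p <-> on_path v w p.
Proof.
elim: w v => [|o w IH] v //=.
by rewrite on_path_unit_steps /= IH.
Qed.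

Definition walk (v : rat * rat) (w : seq op) (i : nat) : rat * rat :=
  foldl vstep v (take i w).

Definition in_profile_from (v : rat * rat) (w : seq op) (p : rat * rat) : Prop :=
  (size w = 0%N /\ p = v) \/
  exists2 i, (0 < i <= size w)%N & segment (walk v w i.-1) (walk v w i) p.

Lemma in_profile_fromE w p : in_profile w p <-> in_profile_from (0, 0) w p.
Proof.
rewrite /in_profile /vertex take0; split.
- by case=> [h|[i [t [hi [ht ->]]]]]; [left | right; exists i => //; exists t].
- by case=> [h|[i hi [t ht ->]]]; [left | right; exists i, t].
Qed.

Lemma in_profile_from_on_path v w p : in_profile_from v w p <-> on_path v w p.
Proof.
elim: w v => [|o w IH] v.
  by split=> [[[_ ->] //|[[|i] //]]|->]; left.
rewrite /= -IH; split.
- case=> [[//]|[[|[|i]] //= hi seg]]; last by right; right; exists i.+1.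
  by left; rewrite /walk /= take0 in seg.
- case=> [seg|[[/size0nil -> ->]|[[|i] hi seg]]] //.
  + by right; exists 1%N; rewrite // /walk /= take0.
  + by right; exists 1%N => //; apply: segment_end.
  + by right; exists i.+2.
Qed.

Theorem mainTheorem9 (w1 w2 : seq op) :
  reduced w1 -> reduced w2 -> equivalent w1 w2 -> same_profile w1 w2.
Proof.
move=> red1 red2 equiv p.
rewrite !in_profile_fromE !in_profile_from_on_path.
by rewrite -on_path_unit_word (unit_word_equivalent red1 red2 equiv) on_path_unit_word.
Qed.
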